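(* Let $\vartheta\in(0,1)$, let $c,r,\alpha,\beta$ be positive integers, and consider the single-agent trust model described in the context. Suppose $\vartheta>\theta_{\rm crit}:=c/(c+r)$. Then almost surely the agent either (A) quits at some finite time, i.e. $\tau<\infty$, with $A_t=1$ for all $t<\tau$ and $A_t=0$ for all $t\ge\tau$; or (B) places trust forever and learns the truth, i.e. $A_t=1$ for all $t=1,2,\dots$ and $\lim_{t\to\infty}\hat\vartheta_t=\vartheta$. In particular $\mathbb{P}(\hat\vartheta_t\not\to\vartheta \text{ and } \tau=\infty)=0$.
   Context: Single-agent trust model: $\vartheta$ is the institution's true trustworthiness; $(X_t)_{t\in\mathbb{N}}$ are i.i.d. with $\mathbb{P}(X_t=1)=\vartheta$, $\mathbb{P}(X_t=0)=1-\vartheta$. The agent has actions $A_t\in\{0,1\}$ and observes $X_t$ only in rounds with $A_t=1$. Let $\hat S_t=\sum_{s=1}^t X_s\mathbf{1}_{\{A_s=1\}}$, $\hat F_t=\sum_{s=1}^t(1-X_s)\mathbf{1}_{\{A_s=1\}}$, and $\hat\vartheta_t=\frac{\alpha+\hat S_t}{\alpha+\beta+\hat S_t+\hat F_t}$ (posterior mean under a Beta$(\alpha,\beta)$ prior). The agent acts myopically: $A_t=1$ if $r\hat\vartheta_n-c(1-\hat\vartheta_n)\ge 0$ for all $n\in\{0,\dots,t-1\}$, and $A_t=0$ otherwise. The quitting time is $\tau:=\inf\{t\in\mathbb{N}\cup\{\infty\}: r\hat\vartheta_t-c(1-\hat\vartheta_t)<0\}$. *)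

From HB Require Import structures.
From mathcomp Require Import all_boot all_order all_algebra.
From mathcomp Require Import all_classical all_reals all_analysis.
Set Implicit Arguments. Unset Strict Implicit. Unset Printing Implicit Defensive.
Import Order.TTheory GRing.Theory Num.Theory.
Local Open Scope ring_scope.

Section TrustModel.
Variable R : realType.
Variables (alpha beta c r : nat).
(* x t = X_t (the outcome of round t, t >= 1; x 0 is never used) *)
Variable x : nat -> bool.

Definition post_mean (s f : nat) : R :=
  (alpha + s)%:R / (alpha + beta + s + f)%:R.

Definition trusts (th : R) : bool := 0 <= r%:R * th - c%:R * (1 - th).

(* Recursive computation of (S_hat_t, F_hat_t, b_t) where
   b_t = [for all n in {0..t}, trusts (theta_hat n)], so that A_{t+1} = b_t.
   In round t+1 the outcome X_{t+1} is recorded iff A_{t+1} = 1. *)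
Fixpoint state (t : nat) : nat * nat * bool :=
  match t with
  | 0 => (0%N, 0%N, trusts (post_mean 0 0))
  | t'.+1 =>
      let: (s, f, b) := state t' in
      let s' := if b then (s + x t)%N else s in
      let f' := if b then (f + ~~ x t)%N else f in
      (s', f', b && trusts (post_mean s' f'))
  end.

Definition Shat (t : nat) : nat := (state t).1.1.
Definition Fhat (t : nat) : nat := (state t).1.2.

Definition theta_hat (t : nat) : R := post_mean (Shat t) (Fhat t).

Definition act (t : nat) : bool := [forall n : 'I_t, trusts (theta_hat n)].

(* Sanity facts: the recursion agrees with the paper's definitions
   hat S_t = sum_{s=1}^t X_s 1{A_s = 1},  hat F_t = sum_{s=1}^t (1-X_s) 1{A_s=1}. *)
Lemma state_flag t : (state t).2 = act t.+1.
Proof.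
elim: t => [|t IH].
  rewrite /act /=; apply/idP/forallP => [H i|H]; first by rewrite ord1 /theta_hat /Shat /Fhat /=.
  by have := H ord0; rewrite /theta_hat /Shat /Fhat.
have E : act t.+2 = act t.+1 && trusts (theta_hat t.+1).
  rewrite /act; apply/forallP/andP => [H|[/forallP H1 H2] i].
    split; last by have := H ord_max.
    by apply/forallP => i; have := H (widen_ord (leqnSn _) i).
  case: (ltnP i t.+1) => Hi; first by have := H1 (Ordinal Hi).
  by have -> : i = ord_max by apply/val_inj/eqP; rewrite eqn_leq Hi -ltnS ltn_ord.
rewrite E -IH /theta_hat /Shat /Fhat /=.
by case: (state t) => [[s f] b].
Qed.

Lemma Shat_sum t : Shat t = (\sum_(1 <= s < t.+1) nat_of_bool (x s && act s))%N.
Proof.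
elim: t => [|t IH]; first by rewrite big_geq.
rewrite big_nat_recr //= -IH -(state_flag t) /Shat /=.
by case: (state t) => [[s f] []] /=; rewrite ?andbT ?andbF ?addn0.
Qed.

Lemma Fhat_sum t : Fhat t = (\sum_(1 <= s < t.+1) nat_of_bool (~~ x s && act s))%N.
Proof.
elim: t => [|t IH]; first by rewrite big_geq.
rewrite big_nat_recr //= -IH -(state_flag t) /Fhat /=.
by case: (state t) => [[s f] []] /=; rewrite ?andbT ?andbF ?addn0.
Qed.

(* Quitting time: tau_is k means tau = k < oo, i.e. k is the least time
   with r*theta_hat_k - c*(1-theta_hat_k) < 0. tau = oo iff no such k. *)
Definition tau_is (k : nat) : Prop :=
  ~~ trusts (theta_hat k) /\ (forall n, (n < k)%N -> trusts (theta_hat n)).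
Definition tau_infinite : Prop := forall t, trusts (theta_hat t).

End TrustModel.

Local Open Scope classical_set_scope.
Definition iid_bernoulli (d : measure_display) (T : measurableType d)
  (R : realType) (P : probability T R) (theta : R) (X : nat -> T -> bool) : Prop :=
  (forall t, measurable [set w | X t w]) /\
  (forall (n : nat) (b : nat -> bool),
     P [set w | forall i, (1 <= i <= n)%N -> X i w = b i] =
     (\prod_(1 <= i < n.+1) (if b i then theta else 1 - theta))%:E).

(* If the agent never distrusts, it observes every outcome, so theta_hat t is
   (alpha + S_t) / (alpha + beta + t) with S_t the number of successes among
   X_1, ..., X_t; it therefore suffices that |S_t - theta t| = o(t) almost surely.
   For each deviation eps = 1/(k+1), a Chernoff bound gives
   P(S_t >= (theta + eps) t) <= q^t and P(S_t <= (theta - eps) t) <= q^t for some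
   q < 1: the exponential moment factorises over the 2^t outcome patterns of the
   first t trials, whose probabilities are fixed by the i.i.d. hypothesis.
   By Borel-Cantelli these events happen only finitely often, outside a countable
   union of null sets.  If instead the agent distrusts at some time, it quits at the
   first such time, which is alternative (A). *)

From HB Require Import structures.
From mathcomp Require Import all_boot all_order all_algebra.
From mathcomp Require Import all_classical all_reals all_analysis.
From mathcomp Require Import ring lra.
Import Order.TTheory GRing.Theory Num.Theory.
Import numFieldNormedType.Exports.
Local Open Scope ring_scope.
Local Open Scope classical_set_scope.

Lemma sumrB_const (R : pzRingType) n (f : 'I_n -> R) (a : R) :
  \sum_(i < n) (f i - a) = \sum_(i < n) f i - a * n%:R.
Proof. by rewrite sumrB sumr_const card_ord mulr_natr. Qed.

Lemma cvg_shifted_mean (R : realType) (s : nat -> R) (th a b : R) :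
  0 <= th <= 1 -> 0 <= a -> 0 <= b ->
  (forall e, 0 < e -> \forall j \near \oo, `|s j - th * j%:R| < e * j%:R) ->
  (a + s j) / (a + b + j%:R) @[j --> \oo] --> th.
Proof.
move=> /andP[th0 th1] a0 b0 dev; apply/cvgrPdist_lt => e e0.
have e20 : 0 < e / 2 by rewrite divr_gt0.
move: (dev _ e20) (nbhs_infty_ge (Num.truncn (2 * (a + b) / e)).+1).
apply: filterS2 => j dev_j j_large.
have ab_small : a + b < e / 2 * j%:R.
  have := truncnS_gt (2 * (a + b) / e); rewrite -(ler_nat R) in j_large.
  rewrite ltr_pdivrMr // => h; have := lt_le_trans h (ler_wpM2r (ltW e0) j_large); lra.
have j0 : 0 < j%:R :> R by rewrite ltr0n (leq_trans _ j_large).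
have D0 : 0 < a + b + j%:R by lra.
have -> : th - (a + s j) / (a + b + j%:R)
    = ((th * (a + b) - a) + (th * j%:R - s j)) / (a + b + j%:R) by field; lra.
rewrite normrM normfV [`|a + b + _|]gtr0_norm // ltr_pdivrMr //.
apply: le_lt_trans (ler_normD _ _) _.
have : `|th * (a + b) - a| <= a + b.
  have := mulr_ge0 th0 (addr_ge0 a0 b0); have := ler_wpM2r (addr_ge0 a0 b0) th1.
  by rewrite mul1r ler_norml => *; apply/andP; split; lra.
have := mulr_ge0 (ltW e0) (addr_ge0 a0 b0).
rewrite distrC in dev_j; lra.
Qed.

Section Chernoff.
Context {R : realType}.

Lemma expR_le_quadratic {x : R} : `|x| <= 2^-1 -> expR x <= 1 + x + 2 * x ^+ 2.
Proof.
rewrite ler_norml => /andP[xlo xhi].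
have e0 := expR_gt0 x.
have expR_1Bx : (1 - x) * expR x <= 1.
  by rewrite -[leRHS](mulVf (lt0r_neq0 e0)) ler_pM2r // -expRN expR_ge1Dx.
have onex_gt0 : 0 < 1 - x by lra.
rewrite -(ler_pM2l onex_gt0); apply: (le_trans expR_1Bx).
have -> : (1 - x) * (1 + x + 2 * x ^+ 2) = 1 + x ^+ 2 * (1 - 2 * x) by ring.
rewrite lerDl; apply: mulr_ge0; [exact: sqr_ge0 | lra].
Qed.

Definition pattern_weight (th : R) {n} (b : {ffun 'I_n -> bool}) : R :=
  \prod_(i < n) (if b i then th else 1 - th).

Lemma pattern_weight_ge0 (th : R) n (b : {ffun 'I_n -> bool}) :
  0 <= th <= 1 -> 0 <= pattern_weight th b.
Proof. by move=> /andP[? ?]; apply: prodr_ge0 => i _; case: (b i); lra. Qed.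

Lemma sum_pattern_weight_expR (th : R) (g : bool -> R) n :
  \sum_(b : {ffun 'I_n -> bool}) pattern_weight th b * expR (\sum_(i < n) g (b i))
  = (th * expR (g true) + (1 - th) * expR (g false)) ^+ n.
Proof.
pose h y := (if y then th else 1 - th) * expR (g y).
transitivity (\sum_(b : {ffun 'I_n -> bool}) \prod_(i < n) h (b i)).
  by apply: eq_bigr => b _; rewrite expR_sum -big_split.
rewrite -(bigA_distr_bigA (fun _ => h)) /=.
rewrite (eq_bigr (fun _ => h true + h false)); last by move=> i _; rewrite big_bool.
by rewrite prodr_const card_ord.
Qed.

Section NegativeDrift.
Context {th eps : R} {z : bool -> R}.
Hypotheses (th01 : 0 < th < 1) (eps01 : 0 < eps <= 1).
Hypotheses (z_bound : forall y, `|z y| <= 2).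
Hypothesis z_mean : th * z true + (1 - th) * z false = - eps.

(* With lam = eps/16 the quadratic error 8 lam^2 = eps^2/32 of the exponential is
   beaten by the drift lam * eps = eps^2/16. *)
Lemma bernoulli_mgf_lt1 :
  th * expR (eps / 16 * z true) + (1 - th) * expR (eps / 16 * z false) < 1.
Proof.
have /andP[th0 th1] := th01; have /andP[e0 e1] := eps01.
set lam := eps / 16.
have lam0 : 0 < lam by rewrite divr_gt0.
have lam_small : 4 * lam <= 1 by rewrite /lam; lra.
have expR_lin y : expR (lam * z y) <= 1 + lam * z y + 8 * lam ^+ 2.
  have := z_bound y; rewrite ler_norml => /andP[zlo zhi].
  have ulo : - (2 * lam) <= lam * z y by nra.
  have uhi : lam * z y <= 2 * lam by nra.
  have u_small : `|lam * z y| <= 2^-1 by rewrite ler_norml; apply/andP; split; lra.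
  apply: le_trans (expR_le_quadratic u_small) _.
  rewrite lerD2l; nra.
have bound_true := ler_wpM2l (ltW th0) (expR_lin true).
have th1' : 0 <= 1 - th by lra.
have bound_false := ler_wpM2l th1' (expR_lin false).
have drift : th * (1 + lam * z true + 8 * lam ^+ 2)
    + (1 - th) * (1 + lam * z false + 8 * lam ^+ 2) = 1 - eps ^+ 2 / 32.
  transitivity (1 + lam * (th * z true + (1 - th) * z false) + 8 * lam ^+ 2); first by ring.
  by rewrite z_mean /lam expr2; field.
have : 0 < eps ^+ 2 / 32 by rewrite divr_gt0 // exprn_gt0.
lra.
Qed.

Lemma chernoff_patterns : exists2 q : R, 0 < q < 1 & forall n,
  \sum_(b : {ffun 'I_n -> bool} | 0 <= \sum_(i < n) z (b i)) pattern_weight th b <= q ^+ n.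
Proof.
have /andP[th0 th1] := th01; have /andP[e0 _] := eps01.
set lam := eps / 16.
have lam0 : 0 < lam by rewrite divr_gt0.
exists (th * expR (lam * z true) + (1 - th) * expR (lam * z false)).
  rewrite bernoulli_mgf_lt1 andbT ltr_wpDr ?mulr_gt0 ?expR_gt0 //.
  by rewrite mulr_ge0 ?expR_ge0 // subr_ge0 ltW.
move=> n; rewrite -(sum_pattern_weight_expR th (fun y => lam * z y)).
have w0 (b : {ffun 'I_n -> bool}) : 0 <= pattern_weight th b.
  by apply: pattern_weight_ge0; rewrite !ltW.
apply: (@le_trans _ _ (\sum_(b : {ffun 'I_n -> bool} | 0 <= \sum_(i < n) z (b i))
  pattern_weight th b * expR (\sum_(i < n) lam * z (b i)))).
  apply: ler_sum => b hb; rewrite -{1}[pattern_weight th b]mulr1 ler_wpM2l //.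
  apply: le_trans (expR_ge1Dx _); rewrite lerDl -mulr_sumr.
  exact: mulr_ge0 (ltW lam0) hb.
rewrite [leRHS](bigID (fun b : {ffun 'I_n -> bool} => 0 <= \sum_(i < n) z (b i))) /= lerDl.
by apply: sumr_ge0 => b _; rewrite mulr_ge0 ?expR_ge0.
Qed.

End NegativeDrift.
End Chernoff.

Lemma negligible_lim_sup_set_geometric (d : measure_display) (T : measurableType d)
    (R : realType) (mu : measure T R) (F : (set T)^nat) (q : R) :
  (forall n, measurable (F n)) -> 0 < q < 1 -> (forall n, (mu (F n) <= (q ^+ n)%:E)%E) ->
  mu.-negligible (lim_sup_set F).
Proof.
move=> mF /andP[q0 q1] muF.
have mL : measurable (lim_sup_set F).
  by apply: bigcapT_measurable => k; apply: bigcup_measurable => j _.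
apply/negligibleP => //; apply: lim_sup_set_cvg0 => //.
apply: (@le_lt_trans _ _ (\sum_(0 <= n <oo) (q ^+ n)%:E)%E).
  by apply: lee_nneseries => [n _ _|n _]; [exact: measure_ge0|exact: muF].
apply: (@le_lt_trans _ _ ((1 / (1 - q))%:E)); last exact: ltry.
apply: lime_le; first by apply: is_cvg_nneseries => n _ _; rewrite lee_fin exprn_ge0 // ltW.
apply: nearW => n; rewrite sumEFin lee_fin.
apply: le_trans (geometric_le_lim n ler01 q0 _); last by rewrite gtr0_norm.
by rewrite /series /=; apply: ler_sum => i _; rewrite mul1r.
Qed.

Lemma not_lim_sup_set {U : Type} {F : (set U)^nat} {w : U} :
  ~ lim_sup_set F w -> \forall n \near \oo, ~ F n w.
Proof.
move=> nF; have [N nFN] : exists N, ~ (\bigcup_(j in [set j | (N <= j)%N]) F j) w.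
  by apply/existsNP => H; apply: nF => n _; exact: H n.
by exists N => // j /= Nj Fj; apply: nFN; exists j.
Qed.

Section IidBernoulli.
Context {d : measure_display} {T : measurableType d} {R : realType}.
Context {P : probability T R} {th : R} {X : nat -> T -> bool}.
Hypothesis X_iid : iid_bernoulli P th X.

Definition pattern n w : {ffun 'I_n -> bool} := [ffun i : 'I_n => X i.+1 w].

Definition pattern_seq {n} (b : {ffun 'I_n -> bool}) (i : nat) : bool :=
  if insub i.-1 is Some j then b j else false.

Lemma pattern_preimage1 n (b : {ffun 'I_n -> bool}) :
  pattern n @^-1` [set b] = [set w | forall i, (1 <= i <= n)%N -> X i w = pattern_seq b i].
Proof.
apply/seteqP; split => w /=.
  move=> <- [|i] //= lt_in.
  by rewrite /pattern_seq /= insubT ffunE.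
by move=> Hw; apply/ffunP => i; rewrite ffunE Hw ?ltn_ord // /pattern_seq /= valK.
Qed.

Lemma measurable_X_eq t y : measurable [set w | X t w = y].
Proof.
case: y; first exact: X_iid.1.
rewrite (_ : [set w | _] = ~` [set w | X t w]); first exact/measurableC/(X_iid.1).
by apply/seteqP; split => w /=; case: (X t w).
Qed.

Lemma measurable_pattern_preimage1 n (b : {ffun 'I_n -> bool}) :
  measurable (pattern n @^-1` [set b]).
Proof.
rewrite pattern_preimage1.
rewrite (_ : [set w | _] = \bigcap_i [set w | (1 <= i <= n)%N -> X i w = pattern_seq b i]);
  last by apply/seteqP; split => [w Hw i _|w Hw i]; [exact: Hw|exact: Hw i I].
apply: bigcapT_measurable => i; case: (1 <= i <= n)%N.
  rewrite (_ : [set w | _] = [set w | X i w = pattern_seq b i]); first exact: measurable_X_eq.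
  by apply/seteqP; split => [w /(_ isT)|w ? _].
by rewrite (_ : [set w | _] = setT); last by apply/seteqP; split.
Qed.

Lemma prob_pattern_preimage1 n (b : {ffun 'I_n -> bool}) :
  P (pattern n @^-1` [set b]) = (pattern_weight th b)%:E.
Proof.
rewrite pattern_preimage1 X_iid.2 (big_add1 _ _ 0 n.+1) big_mkord.
by congr EFin; apply: eq_bigr => i _; rewrite /pattern_seq /= valK.
Qed.

Lemma pattern_in_bigcup n (Q : pred {ffun 'I_n -> bool}) :
  [set w | Q (pattern n w)] = \bigcup_(b in [set` enum Q]) pattern n @^-1` [set b].
Proof.
apply/seteqP; split => [w Qw|w [b + /= ->]]; last by rewrite /= mem_enum.
by exists (pattern n w); rewrite /= ?mem_enum.
Qed.

Lemma measurable_pattern_in n (Q : pred {ffun 'I_n -> bool}) :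
  measurable [set w | Q (pattern n w)].
Proof.
rewrite pattern_in_bigcup; apply: fin_bigcup_measurable; first exact: finite_seq.
by move=> b _; exact: measurable_pattern_preimage1.
Qed.

Lemma prob_pattern_in n (Q : pred {ffun 'I_n -> bool}) :
  P [set w | Q (pattern n w)] = (\sum_(b | Q b) pattern_weight th b)%:E.
Proof.
rewrite pattern_in_bigcup measure_fin_bigcup //.
- rewrite -(fsbig_seq _ _ (enum_uniq Q)) big_enum /= -sumEFin.
  by apply: eq_bigr => b _; exact: prob_pattern_preimage1.
- exact: trivIset_preimage1.
- by move=> b _; exact: measurable_pattern_preimage1.
Qed.

Lemma negligible_lim_sup_sum_ge0 {z : bool -> R} {eps : R} :
  0 < th < 1 -> 0 < eps <= 1 -> (forall y, `|z y| <= 2) ->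
  th * z true + (1 - th) * z false = - eps ->
  P.-negligible (lim_sup_set (fun n => [set w | 0 <= \sum_(i < n) z (X i.+1 w)])).
Proof.
move=> th01 eps01 z_bound z_mean.
have [q q01 chernoff] := chernoff_patterns th01 eps01 z_bound z_mean.
pose Q n : pred {ffun 'I_n -> bool} := fun b => 0 <= \sum_(i < n) z (b i).
have -> : (fun n => [set w | 0 <= \sum_(i < n) z (X i.+1 w)])
        = (fun n => [set w | Q n (pattern n w)]).
  apply/funext => n; apply/seteqP.
  suff E w : \sum_(i < n) z (pattern n w i) = \sum_(i < n) z (X i.+1 w).
    by split => w; rewrite /Q /= E.
  by apply: eq_bigr => i _; rewrite ffunE.
apply: (@negligible_lim_sup_set_geometric _ _ _ P _ q _ q01) => n.
  exact: measurable_pattern_in.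
by move: (prob_pattern_in n (Q n)) => /= ->; rewrite lee_fin chernoff.
Qed.

Lemma ae_partial_sum_deviation : 0 < th < 1 ->
  P.-negligible [set w | ~ forall e, 0 < e -> \forall j \near \oo,
    `|\sum_(i < j) (X i.+1 w)%:R - th * j%:R| < e * j%:R].
Proof.
move=> th01; have /andP[th0 th1] := th01.
pose eps k : R := k.+1%:R^-1.
have eps01 k : 0 < eps k <= 1 by rewrite invr_gt0 ltr0n /= invf_le1 ?ltr0n // ler1n.
pose up k (y : bool) : R := y%:R - (th + eps k).
pose down k (y : bool) : R := - (y%:R - (th - eps k)).
pose above k n := [set w | 0 <= \sum_(i < n) up k (X i.+1 w)].
pose below k n := [set w | 0 <= \sum_(i < n) down k (X i.+1 w)].
have N_above k : P.-negligible (lim_sup_set (above k)).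
  have /andP[e0 e1] := eps01 k.
  apply: (negligible_lim_sup_sum_ge0 th01 (eps01 k)); last by rewrite /up /=; ring.
  by case; rewrite /up /= ler_norml; apply/andP; split; lra.
have N_below k : P.-negligible (lim_sup_set (below k)).
  have /andP[e0 e1] := eps01 k.
  apply: (negligible_lim_sup_sum_ge0 th01 (eps01 k)); last by rewrite /down /=; ring.
  by case; rewrite /down /= ler_norml; apply/andP; split; lra.
apply: negligibleS (negligible_bigcup (fun k => negligibleU (N_above k) (N_below k))) => w.
apply: contra_notP => not_bad e e0.
have [k eps_le] : exists k, eps k <= e.
  exists (Num.truncn e^-1); rewrite /eps -[leRHS]invrK lef_pV2 ?posrE ?invr_gt0 //.
  exact/ltW/truncnS_gt.
have not_above : ~ lim_sup_set (above k) w.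
  by move=> h; apply: not_bad; exists k => //; left.
have not_below : ~ lim_sup_set (below k) w.
  by move=> h; apply: not_bad; exists k => //; right.
move: (not_lim_sup_set not_above) (not_lim_sup_set not_below); apply: filterS2 => j /=.
rewrite /above /below /up /down /= sumrN !sumrB_const => /negP + /negP; rewrite -!ltNge.
set S := \sum_(i < j) _ => Sabove Sbelow.
have eps_j : eps k * j%:R <= e * j%:R by rewrite ler_wpM2r.
rewrite ltr_norml; apply/andP; split; lra.
Qed.

End IidBernoulli.

Section TrustDynamics.
Context {R : realType} {alpha beta c r : nat} {x : nat -> bool}.

Lemma act_of_tau_infinite :
  tau_infinite R alpha beta c r x -> forall t, act R alpha beta c r x t.
Proof. by move=> tinf t; apply/forallP => i; exact: tinf. Qed.

Lemma theta_hat_of_tau_infinite : tau_infinite R alpha beta c r x -> forall t,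
  theta_hat R alpha beta c r x t
  = (alpha%:R + \sum_(i < t) (x i.+1)%:R) / (alpha%:R + beta%:R + t%:R).
Proof.
move=> tinf t; have act_t s := act_of_tau_infinite tinf s.
have S_t : Shat R alpha beta c r x t = (\sum_(i < t) x i.+1)%N.
  rewrite Shat_sum (big_add1 _ _ 0 t.+1) big_mkord.
  by apply: eq_bigr => i _; rewrite act_t andbT.
have SF_t : (Shat R alpha beta c r x t + Fhat R alpha beta c r x t)%N = t.
  rewrite Shat_sum Fhat_sum -big_split /= (eq_big_nat _ _ (F2 := fun => 1%N)).
    by rewrite sum_nat_const_nat subn1 muln1.
  by move=> i _; rewrite act_t; case: (x i).
by rewrite /theta_hat /post_mean -addnA SF_t !natrD S_t natr_sum.
Qed.

Lemma not_tau_infinite_tau_is : ~ tau_infinite R alpha beta c r x ->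
  exists k, tau_is R alpha beta c r x k /\ forall t, act R alpha beta c r x t = (t <= k)%N.
Proof.
move=> /existsNP[t0 /negP distrust].
pose distrusts t := ~~ trusts c r (theta_hat R alpha beta c r x t).
have [k not_k k_min] := ex_minnP (ex_intro distrusts t0 distrust).
have trusts_lt n : (n < k)%N -> trusts c r (theta_hat R alpha beta c r x n).
  by move=> lt_nk; apply/negPn/negP => /k_min; rewrite leqNgt lt_nk.
exists k; split=> // t; apply/forallP/idP => [trust_all|le_tk i].
  rewrite leqNgt; apply/negP => lt_kt.
  by move: (trust_all (Ordinal lt_kt)); rewrite (negbTE not_k).
exact/trusts_lt/(leq_trans (ltn_ord i)).
Qed.

End TrustDynamics.

Theorem lemma3p2 (d : measure_display) (T : measurableType d) (R : realType)
  (P : probability T R) (theta : R) (c r alpha beta : nat)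
  (X : nat -> T -> bool) :
  0 < theta < 1 ->
  (0 < c)%N -> (0 < r)%N -> (0 < alpha)%N -> (0 < beta)%N ->
  iid_bernoulli P theta X ->
  c%:R / (c + r)%:R < theta ->
  (P.-negligible [set w | ~ (
     (* (A) the agent quits at a finite time tau *)
     (exists k : nat, @tau_is R alpha beta c r (X^~ w) k /\
        (forall t, (1 <= t)%N ->
           @act R alpha beta c r (X^~ w) t = (t <= k)%N))
     \/
     (* (B) trust forever and learn the truth *)
     ((forall t, (1 <= t)%N -> @act R alpha beta c r (X^~ w) t) /\
      (@theta_hat R alpha beta c r (X^~ w) t @[t --> \oo] --> theta)))]
   /\
   P.-negligible [set w | ~ (@theta_hat R alpha beta c r (X^~ w) t @[t --> \oo] --> theta)
                          /\ @tau_infinite R alpha beta c r (X^~ w)]).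
Proof.
move=> theta01 _ _ _ _ X_iid _.
have learns : P.-negligible [set w |
    ~ (theta_hat R alpha beta c r (X^~ w) t @[t --> \oo] --> theta)
    /\ tau_infinite R alpha beta c r (X^~ w)].
  apply: negligibleS (ae_partial_sum_deviation X_iid theta01) => w /= [+ tinf] dev.
  rewrite (funext (theta_hat_of_tau_infinite tinf)); apply.
  by apply: cvg_shifted_mean => //; case/andP: theta01 => *; rewrite !ltW.
split=> //; apply: negligibleS learns => w /= neither.
have [tinf|/not_tau_infinite_tau_is[k [tau_k act_k]]] :=
  pselect (tau_infinite R alpha beta c r (X^~ w)).
  split=> // learn; apply: neither; right; split=> // t _.
  exact: act_of_tau_infinite.
by exfalso; apply: neither; left; exists k; split=> // t _; exact: act_k.
Qed.
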